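(* Let $Y_1,Y_2,\ldots$ be i.i.d. Bernoulli$(1/2)$ and let $(Z^k)_k$ be generated by the bit-drop scheme described in the context, independently of $(Y_i)$; let $L^a(k)=L^a_n(k)$ be the length of a longest common subsequence of $Z^k$ and $Y_1\ldots Y_n$. Let $\gamma>0$, let $k$ satisfy $0.45n\le k<n$, let $\sigma_k:=\sigma(Z^k_i,Y_j: i\le k,\ j\le n)$, and let $E^n_{2k}$ be the event that every $(\pi,\eta)\in M^k$ has more than $\gamma n$ non-empty matches. Then on the event $E^n_{2k}$, $$P\big(L^a(k+1)-L^a(k)=1\,\big|\,\sigma_k\big)\geq 0.5\gamma.$$
   Context: Bit-drop scheme: let $V_1,V_2,\ldots$ be i.i.d. Bernoulli$(1/2)$ and let $T_3,T_4,\ldots$ be independent, independent of $(V_k)$, with $T_{k+1}$ uniform on $\{2,\ldots,k\}$. Set $Z^2:=V_1V_2$ and, given $Z^k=Z^k_1\ldots Z^k_k$, define $Z^{k+1}_j:=Z^k_j$ for $j<T_{k+1}$, $Z^{k+1}_{T_{k+1}}:=V_{k+1}$, $Z^{k+1}_j:=Z^k_{j-1}$ for $T_{k+1}<j\le k+1$. A pair of matching subsequences of $Z^k$ and $Y_1\ldots Y_n$ of length $m$ is a pair $(\pi,\eta)$ of strictly increasing maps $\pi:\{1,\ldots,m\}\to\{1,\ldots,k\}$, $\eta:\{1,\ldots,m\}\to\{1,\ldots,n\}$ with $Z^k_{\pi(i)}=Y_{\eta(i)}$ for all $i$. $M^k_2$ is the set of such pairs of maximal length; pairs are ordered componentwise,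 and $M^k$ is the set of minimal elements of $M^k_2$. For $1\le i\le m-1$, $(\pi(i),\pi(i+1),\eta(i),\eta(i+1))$ is a match of $(\pi,\eta)$; it is non-empty if $\eta(i)+2\le\eta(i+1)$. *)

From HB Require Import structures.
From mathcomp Require Import all_boot all_order all_algebra.
Set Implicit Arguments. Unset Strict Implicit. Unset Printing Implicit Defensive.
Import Order.TTheory GRing.Theory Num.Theory.

Definition lcs (a b : seq bool) : nat :=
  \max_(m : (size a).-tuple bool | subseq (mask m a) b) size (mask m a).

(* ---------- Matching subsequences (1-based indices, as in the paper) ---------- *)
(* (p, q) encodes (pi, eta): p = [pi(1); ...; pi(m)], q = [eta(1); ...; eta(m)] *)
Definition matching (z y : seq bool) (p q : seq nat) : Prop :=
  [/\ size p = size q, sorted ltn p, sorted ltn q,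
      all (fun i => 0 < i <= size z) p & all (fun j => 0 < j <= size y) q] /\
      (forall i, i < size p -> nth false z (nth 0 p i).-1 = nth false y (nth 0 q i).-1).

Definition M2 (z y : seq bool) (p q : seq nat) : Prop :=
  matching z y p q /\ size p = lcs z y.

Definition pair_le (p q p' q' : seq nat) : Prop :=
  size p = size p' /\ size q = size q' /\
  forall i, i < size p -> nth 0 p i <= nth 0 p' i /\ nth 0 q i <= nth 0 q' i.

Definition Mmin (z y : seq bool) (p q : seq nat) : Prop :=
  M2 z y p q /\
  forall p' q', M2 z y p' q' -> pair_le p' q' p q -> p' = p /\ q' = q.

Definition nonempty_matches (q : seq nat) : nat :=
  count (fun i => (nth 0 q i).+2 <= nth 0 q i.+1) (iota 0 (size q).-1).

(* the event E^n_{2k}, as a property of (Z^k, Y) *)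
Definition Eevent {R : realFieldType} (gamma : R) (n : nat) (z y : seq bool) : Prop :=
  forall p q, Mmin z y p q -> (gamma * n%:R < (nonempty_matches q)%:R)%R.

(* insert bit b at (1-based) position t *)
Definition ins (z : seq bool) (t : nat) (b : bool) : seq bool :=
  take t.-1 z ++ b :: drop t.-1 z.

(* Zrec v t m = Z^(m+2), where v i = V_i and t j = T_j *)
Fixpoint Zrec (v : nat -> bool) (t : nat -> nat) (m : nat) : seq bool :=
  match m with
  | 0 => [:: v 1; v 2]
  | m'.+1 => ins (Zrec v t m') (t m'.+3) (v m'.+3)
  end.

(* Finite sample space carrying (V_1..V_{k+1}, T_3..T_{k+1}, Y_1..Y_n),
   equipped with the uniform probability (= product of the uniform laws).
   The T-coordinate indexed by i : 'I_(k-1) stores T_{i+3} - 2 in 'I_(i+1),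
   i.e. T_{i+3} is uniform on {2, ..., i+2}. *)
Definition Omega (k n : nat) : finType :=
  ((k.+1).-tuple bool * {dffun forall i : 'I_(k.-1), 'I_(i.+1)} * n.-tuple bool)%type.

Definition Vof (k n : nat) (w : Omega k n) (i : nat) : bool := nth false (tval w.1.1) i.-1.

Definition Tof (k n : nat) (w : Omega k n) (j : nat) : nat :=
  match (insub (j - 3) : option 'I_(k.-1)) with
  | Some i => (val (w.1.2 i)).+2
  | None => 2
  end.

(* Z^j for j >= 2 *)
Definition Zof (k n : nat) (w : Omega k n) (j : nat) : seq bool :=
  Zrec (Vof w) (Tof w) (j - 2).

Definition Yof (k n : nat) (w : Omega k n) : seq bool := tval w.2.

Definition La (k n : nat) (w : Omega k n) (j : nat) : nat := lcs (Zof w j) (Yof w).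

Definition Prob {R : realFieldType} (k n : nat) (A : pred (Omega k n)) : R :=
  (#|A|%:R / #|Omega k n|%:R)%R.

(* Fix a minimal pair (pi, eta) in M^k; on E^n_{2k} it has more than gamma n non-empty
   matches.  Distinct matches give distinct
   positions T_(k+1) = pi(i+1), so more than gamma n of the 2(k-1) equally likely values of
   (V_(k+1), T_(k+1)) make L^a increase, whatever (Z^k, Y) is, and
   gamma n / (2(k-1)) >= gamma / 2 because k < n. *)

From HB Require Import structures.
From mathcomp Require Import all_boot all_order all_algebra zify lra.
From Stdlib Require Import Classical.
Set Implicit Arguments. Unset Strict Implicit. Unset Printing Implicit Defensive.

Lemma size_subseq_leq_lcs (a b s : seq bool) : subseq s a -> subseq s b -> size s <= lcs a b.
Proof.
move=> /subseqP [m /eqP size_m ->] sub_b.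
exact: (leq_bigmax_cond (Tuple size_m) sub_b).
Qed.

Lemma lcs_attained (a b : seq bool) :
  exists s, [/\ subseq s a, subseq s b & size s = lcs a b].
Proof.
have : 0 < #|[pred m : (size a).-tuple bool | subseq (mask m a) b]|.
  apply/card_gt0P; exists (nseq_tuple (size a) false).
  by rewrite inE /= mask_false sub0seq.
move=> /(eq_bigmax_cond (fun m : (size a).-tuple bool => size (mask m a))) [m sub_b lcsE].
by exists (mask m a); rewrite /lcs lcsE mask_subseq.
Qed.

Lemma subseq_cat_cons (T : eqType) (s a1 a2 : seq T) x :
  subseq s (a1 ++ x :: a2) ->
  exists2 s', subseq s' (a1 ++ a2) & subseq s' s /\ size s <= (size s').+1.
Proof.
move=> /subseqP [m size_m ->].
have size_m2 : size (drop (size a1) m) = (size a2).+1.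
  by rewrite size_drop size_m size_cat addKn.
rewrite -[m in mask m](cat_take_drop (size a1)) mask_cat; last first.
  by rewrite size_takel // size_m size_cat leq_addr.
case: (drop _ m) size_m2 => [//|c m2 [size_m2]].
exists (mask (take (size a1) m) a1 ++ mask m2 a2).
  by apply: cat_subseq; apply: mask_subseq.
split; last by rewrite !size_cat; case: c => /=; lia.
apply: cat_subseq; first exact: subseq_refl.
by case: c => //; apply: subseq_trans (subseq_cons _ _).
Qed.

Lemma lcs_ins_leq (z y : seq bool) t b : lcs (ins z t b) y <= (lcs z y).+1.
Proof.
have [s [sub_z sub_y <-]] := lcs_attained (ins z t b) y.
have [s' sub_z' [sub_s size_s]] := subseq_cat_cons sub_z.
apply: leq_trans size_s _; rewrite ltnS; apply: size_subseq_leq_lcs (subseq_trans sub_s sub_y).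
by rewrite cat_take_drop in sub_z'.
Qed.

Lemma sorted_take_drop_lt (l : seq nat) j x x' :
  sorted ltn l -> x \in take j l -> x' \in drop j l -> x < x'.
Proof.
rewrite (sorted_pairwise ltn_trans) -[l in pairwise _ l](cat_take_drop j) pairwise_cat.
by case/and3P => /allrelP lt_take_drop _ _; apply: lt_take_drop.
Qed.

Lemma sorted_take_le (l : seq nat) j x :
  sorted ltn l -> j < size l -> x \in take j.+1 l -> x <= nth 0 l j.
Proof.
move=> sorted_l lt_j; rewrite (take_nth 0 lt_j) mem_rcons inE => /predU1P [-> // | x_take].
by apply/ltnW/(sorted_take_drop_lt sorted_l x_take); rewrite (drop_nth 0 lt_j) mem_head.
Qed.

Lemma sorted_drop_ge (l : seq nat) j x :
  sorted ltn l -> j < size l -> x \in drop j l -> nth 0 l j <= x.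
Proof.
move=> sorted_l lt_j; rewrite (drop_nth 0 lt_j) inE => /predU1P [-> // | x_drop].
apply/ltnW/(sorted_take_drop_lt sorted_l _ x_drop).
by rewrite (take_nth 0 lt_j) mem_rcons mem_head.
Qed.

Definition nths (T : Type) (x0 : T) (z : seq T) (l : seq nat) : seq T :=
  [seq nth x0 z j.-1 | j <- l].

Section Nths.
Variables (T : eqType) (x0 : T).

Lemma nths_subseq_drop (z : seq T) a b l : sorted ltn l ->
  all (fun j => a < j <= b) l -> b <= size z -> subseq (nths x0 z l) (drop a z).
Proof.
elim: l a => [|i l IHl] a /=; first by rewrite sub0seq.
move=> sorted_il /andP[/andP[lt_ai le_ib] range_l] le_bz.
rewrite -[drop a z](cat_take_drop (i.-1 - a)) drop_drop subnK; last lia.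
rewrite [drop i.-1 z](drop_nth x0); last by apply: leq_trans le_bz; lia.
apply: subseq_trans (suffix_subseq _ _); rewrite /= eqxx prednK; last lia.
apply: IHl (path_sorted sorted_il) _ le_bz; apply/allP => j l_j.
by rewrite (allP (order_path_min ltn_trans sorted_il)) //=; case/andP: (allP range_l j l_j).
Qed.

Lemma nths_subseq_take (z : seq T) b l : sorted ltn l ->
  all (fun j => 0 < j <= b) l -> b <= size z -> subseq (nths x0 z l) (take b z).
Proof.
move=> sorted_l range_l le_bz.
have -> : nths x0 z l = nths x0 (take b z) l.
  by apply/eq_in_map => j /(allP range_l) /andP[j_gt0 le_jb]; rewrite nth_take //; lia.
by rewrite -[X in subseq _ X]drop0; apply: nths_subseq_drop range_l _; rewrite ?size_takel.
Qed.

Lemma nths_take_subseq (z : seq T) l j c : sorted ltn l ->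
  all (fun x => 0 < x <= size z) l -> j < size l -> nth 0 l j <= c -> c <= size z ->
  subseq (nths x0 z (take j.+1 l)) (take c z).
Proof.
move=> sorted_l range_l lt_j le_c le_cz.
apply: nths_subseq_take (take_sorted _ sorted_l) _ le_cz; apply/allP => x x_take.
have := sorted_take_le sorted_l lt_j x_take.
by have /andP[] := allP range_l x (mem_take x_take); lia.
Qed.

Lemma nths_drop_subseq (z : seq T) l j d : sorted ltn l ->
  all (fun x => 0 < x <= size z) l -> j < size l -> d < nth 0 l j ->
  subseq (nths x0 z (drop j l)) (drop d z).
Proof.
move=> sorted_l range_l lt_j lt_d.
apply: (nths_subseq_drop (b := size z) (drop_sorted _ sorted_l)) => //; apply/allP => x x_drop.
have := sorted_drop_ge sorted_l lt_j x_drop.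
by have /andP[] := allP range_l x (mem_drop x_drop); lia.
Qed.

Lemma subseq_nths (s z : seq T) : subseq s z ->
  exists l, [/\ sorted ltn l, all (fun j => 0 < j <= size z) l & nths x0 z l = s].
Proof.
move=> /subseqP [m _ ->]; exists (map succn (mask m (iota 0 (size z)))); split.
- by apply: homo_sorted (sorted_mask ltn_trans _ (iota_ltn_sorted 0 _)).
- by rewrite all_map; apply/allP => j /mem_mask; rewrite mem_iota.
- by rewrite /nths -map_comp map_mask -[in RHS](mkseq_nth x0 z).
Qed.

End Nths.

Lemma matching_nths z y p q : matching z y p q -> nths false z p = nths false y q.
Proof.
move=> [[size_pq _ _ _ _] matchE]; apply: (@eq_from_nth _ false).
  by rewrite !size_map.
by move=> i; rewrite size_map => lt_ip; rewrite !(nth_map 0) -?size_pq //; apply: matchE.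
Qed.

Lemma M2_exists z y : exists p q, M2 z y p q.
Proof.
have [s [sub_z sub_y size_s]] := lcs_attained z y.
have [p [sorted_p range_p s_p]] := subseq_nths false sub_z.
have [q [sorted_q range_q s_q]] := subseq_nths false sub_y.
have nths_pq := etrans s_p (esym s_q).
have size_pq : size p = size q by have := congr1 size nths_pq; rewrite !size_map.
exists p, q; split; last by rewrite -size_s -s_p size_map.
split=> // i lt_ip.
have := congr1 (nth false ^~ i) nths_pq.
by rewrite /nths !(nth_map 0) -?size_pq.
Qed.

Lemma leqif_sumn_nth (s s' : seq nat) : size s' = size s ->
  (forall i, i < size s -> nth 0 s' i <= nth 0 s i) -> sumn s' <= sumn s ?= iff (s' == s).
Proof.
elim: s s' => [|a s IHs] [|a' s'] //= [size_s'] le_s's.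
rewrite eqseq_cons; apply: leqif_add; first exact/leqif_eq/(le_s's 0).
by apply: IHs => // i; apply: (le_s's i.+1).
Qed.

Lemma pair_le_weight p q p' q' : size p = size q -> pair_le p' q' p q ->
  sumn p' + sumn q' <= sumn p + sumn q ?= iff (p' == p) && (q' == q).
Proof.
move=> size_pq [size_p' [size_q']]; rewrite size_p' => le_pq.
apply: leqif_add; apply: leqif_sumn_nth => // i lt_i.
  by case: (le_pq i lt_i).
by case: (le_pq i); rewrite ?size_pq.
Qed.

Lemma Mmin_exists z y : exists p q, Mmin z y p q.
Proof.
have [p0 [q0 M2_0]] := M2_exists z y.
suff: forall N p q, M2 z y p q -> sumn p + sumn q = N -> exists p q, Mmin z y p q.
  by move/(_ _ p0 q0 M2_0 erefl).
elim/ltn_ind => N IHN p q M2_pq weightE.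
have [min_pq | not_min] := classic (Mmin z y p q); first by exists p, q.
have [p' [q' [[M2' le'] ne']]] :
    exists p' q', (M2 z y p' q' /\ pair_le p' q' p q) /\ ~ (p' = p /\ q' = q).
  apply: NNPP => none; apply: not_min; split=> // p' q' M2' le'.
  by apply: NNPP => ne; apply: none; exists p', q'.
have size_pq : size p = size q by case: M2_pq => -[[]].
apply: IHN M2' erefl; rewrite -weightE (ltn_leqif (pair_le_weight size_pq le')).
by apply: contra_notN ne' => /andP[/eqP-> /eqP->].
Qed.

Lemma lcs_ins_nonempty_match z y p q i : M2 z y p q -> i.+1 < size p ->
  (nth 0 q i).+2 <= nth 0 q i.+1 ->
  lcs (ins z (nth 0 p i.+1) (nth false y (nth 0 q i))) y = (lcs z y).+1.
Proof.
move=> [match_pq size_p] lt_i1p gap.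
have [[size_pq sorted_p sorted_q range_p range_q] _] := match_pq.
have lt_i1q : i.+1 < size q by rewrite -size_pq.
set t := nth 0 p i.+1; set u := nth 0 q i.
have /andP[t_gt0 t_le] : 0 < t <= size z by move/(all_nthP 0): range_p; apply.
have lt_uy : u < size y.
  have /andP[_ ] : 0 < nth 0 q i.+1 <= size y by move/(all_nthP 0): range_q; apply.
  lia.
have lt_pi_t : nth 0 p i < t.
  by apply: (sorted_ltn_nth ltn_trans) => //; rewrite inE; lia.
(* Split the matched subsequence after its (i+1)-th letter and put the unused letter
   y_u (0-based) in between. *)
set s1 := nths false z (take i.+1 p); set s2 := nths false z (drop i.+1 p).
have s1E : s1 = nths false y (take i.+1 q).
  by rewrite /s1 /nths !map_take -!/(nths _ _ _) (matching_nths match_pq).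
have s2E : s2 = nths false y (drop i.+1 q).
  by rewrite /s2 /nths !map_drop -!/(nths _ _ _) (matching_nths match_pq).
apply/eqP; rewrite eqn_leq lcs_ins_leq /= -size_p.
have -> : (size p).+1 = size (s1 ++ nth false y u :: s2).
  by rewrite size_cat /= addnS !size_map -size_cat cat_take_drop.
apply: size_subseq_leq_lcs.
- rewrite /ins; apply: cat_subseq; last rewrite /= eqxx.
    apply: (nths_take_subseq _ sorted_p range_p (ltnW lt_i1p)) _; first lia.
    exact: leq_trans (leq_pred t) t_le.
  by apply: (nths_drop_subseq _ sorted_p range_p lt_i1p (d := t.-1)); lia.
- rewrite s1E s2E -[y in subseq _ y](cat_take_drop u) [drop u y](drop_nth false lt_uy).
  apply: cat_subseq; last rewrite /= eqxx.
    exact: (nths_take_subseq _ sorted_q range_q (ltnW lt_i1q) (c := u) (leqnn u) (ltnW lt_uy)).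
  exact: (nths_drop_subseq _ sorted_q range_q lt_i1q (d := u.+1) gap).
Qed.

(* The last step (V_(k+1), T_(k+1) - 2) of the scheme, for k = m + 2. *)
Definition draw (m : nat) := (bool * 'I_m.+1)%type.

Section LastDraw.
Variables m n : nat.
Implicit Types (g : draw m) (w : Omega m.+2 n).

Definition last_draw w : draw m := (nth false w.1.1 m.+2, w.1.2 ord_max).

Lemma size_set_last (t : (m.+3).-tuple bool) b : size (set_nth false t m.+2 b) == m.+3.
Proof. by rewrite size_set_nth size_tuple maxnn. Qed.

Definition set_draw g w : Omega m.+2 n :=
  ((Tuple (size_set_last w.1.1 g.1),
    [ffun i : 'I_m.+1 => if val i == m then inord (val g.2) else w.1.2 i]), w.2).

Lemma last_set_draw g w : last_draw (set_draw g w) = g.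
Proof.
case: g => b t; rewrite /last_draw /set_draw /= nth_set_nth /= eqxx; congr (_, _).
by apply: val_inj; rewrite ffunE /= eqxx /= inordK.
Qed.

Lemma set_last_draw w : set_draw (last_draw w) w = w.
Proof.
case: w => [[v f] y]; rewrite /set_draw /last_draw /=; congr (_, _, _).
- apply: val_inj => /=; apply: (@eq_from_nth _ false).
    by rewrite size_set_nth size_tuple maxnn.
  by move=> i _; rewrite nth_set_nth /=; case: eqP => // ->.
- apply/ffunP => i; rewrite ffunE; case: eqP => // i_max.
  have -> : i = ord_max by apply: val_inj.
  by apply: val_inj; rewrite /= inordK.
Qed.

Lemma set_drawK g g' w : set_draw g (set_draw g' w) = set_draw g w.
Proof.
case: w => [[v f] y]; rewrite /set_draw /=; congr (_, _, _).
- apply: val_inj => /=; apply: (@eq_from_nth _ false).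
    by rewrite !size_set_nth size_tuple !maxnn.
  move=> i _; rewrite !nth_set_nth /=; case: ifP => // ne_i.
  by rewrite nth_set_nth /= ne_i.
- by apply: eq_dffun => i; rewrite ffunE; case: eqP.
Qed.

(* An involution, hence a bijection between the pairs (w, g) with set_draw g w \in B and
   the pairs with w \in B. *)
Definition swap_draw (x : Omega m.+2 n * draw m) := (set_draw x.2 x.1, last_draw x.1).

Lemma swap_drawK : involutive swap_draw.
Proof. by case=> w g; rewrite /swap_draw /= set_drawK set_last_draw last_set_draw. Qed.

Lemma sum_card_set_draw (B : pred (Omega m.+2 n)) :
  \sum_w #|[pred g | set_draw g w \in B]| = #|B| * #|{: draw m}|.
Proof.
have cardE (T : finType) (P : pred T) : #|P| = \sum_x (x \in P : nat).
  by rewrite -sum1_card big_mkcond /=; apply: eq_bigr => x _; case: (x \in P).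
have -> : #|B| * #|{: draw m}| = \sum_(x : Omega m.+2 n * draw m) (x.1 \in B : nat).
  rewrite -(pair_bigA _ (fun w (g : draw m) => (w \in B : nat))) cardE big_distrl /=.
  apply: eq_bigr => w _.
  by rewrite sum_nat_const mulnC.
under eq_bigr do rewrite cardE.
rewrite pair_bigA [RHS](reindex_inj (inv_inj swap_drawK)).
by apply: eq_bigr => -[w g] _; rewrite inE.
Qed.

End LastDraw.

Lemma size_ins (z : seq bool) t b : size (ins z t b) = (size z).+1.
Proof. by rewrite /ins size_cat /= addnS -size_cat cat_take_drop. Qed.

Lemma size_Zrec v t j : size (Zrec v t j) = j.+2.
Proof. by elim: j => [|j IHj] //=; rewrite size_ins IHj. Qed.

Lemma eq_Zrec v v' t t' j :
  (forall i, i <= j.+2 -> v i = v' i) -> (forall i, 3 <= i <= j.+2 -> t i = t' i) ->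
  Zrec v t j = Zrec v' t' j.
Proof.
elim: j => [|j IHj] eq_v eq_t /=; first by rewrite !eq_v.
by rewrite eq_v ?eq_t ?IHj // => [i le_i | i le_i |]; [apply: eq_v | apply: eq_t |]; lia.
Qed.

Section ZofSetDraw.
Variables m n : nat.
Implicit Types (g : draw m) (w : Omega m.+2 n).

Lemma size_Zof w : size (Zof w m.+2) = m.+2.
Proof. by rewrite /Zof size_Zrec !subSS subn0. Qed.

Lemma Yof_set_draw g w : Yof (set_draw g w) = Yof w.
Proof. by []. Qed.

Lemma Vof_set_draw g w i : Vof (set_draw g w) i = if i.-1 == m.+2 then g.1 else Vof w i.
Proof. by rewrite /Vof /= nth_set_nth. Qed.

Lemma Tof_set_draw g w j : 3 <= j ->
  Tof (set_draw g w) j = if j == m.+3 then (val g.2).+2 else Tof w j.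
Proof.
move=> le3j; rewrite /Tof /=; case: insubP => [i _ iE | ].
- rewrite ffunE; have -> : (val i == m) = (j == m.+3) by apply/eqP/eqP; lia.
  case: (j =P m.+3) => // j_eq; rewrite inordK //; have := ltn_ord g.2; rewrite /= in iE; lia.
- by case: (j =P m.+3) => // ->; rewrite !subSS subn0 ltnSn.
Qed.

Lemma Zof_set_draw g w : Zof (set_draw g w) m.+2 = Zof w m.+2.
Proof.
apply: eq_Zrec => i le_i; first by rewrite Vof_set_draw; case: eqP => //; lia.
by rewrite Tof_set_draw; [case: eqP => //; lia | lia].
Qed.

Lemma Zof_succ_set_draw g w :
  Zof (set_draw g w) m.+3 = ins (Zof w m.+2) (val g.2).+2 g.1.
Proof.
have ZofE w' : Zof w' m.+2 = Zrec (Vof w') (Tof w') m by rewrite /Zof !subSS subn0.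
rewrite /Zof !subSS subn0 /= -!ZofE Zof_set_draw.
by rewrite Tof_set_draw // eqxx Vof_set_draw eqxx.
Qed.

End ZofSetDraw.

Lemma card_lcs_ins_incr m z y p q : size z = m.+2 -> M2 z y p q ->
  nonempty_matches q <=
  #|[pred g : draw m | lcs (ins z (val g.2).+2 g.1) y == (lcs z y).+1]|.
Proof.
move=> size_z M2_pq; have [[[size_pq sorted_p _ range_p _] _] _] := M2_pq.
set I := [seq i <- iota 0 (size q).-1 | (nth 0 q i).+2 <= nth 0 q i.+1].
have I_bounds i : i \in I -> [/\ i.+1 < size p, (nth 0 q i).+2 <= nth 0 q i.+1
                               & 2 <= nth 0 p i.+1 <= m.+2].
  rewrite mem_filter mem_iota => /andP[gap lt_i]; have lt_i1 : i.+1 < size p by lia.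
  have lt_pi : nth 0 p i < nth 0 p i.+1.
    by apply: (sorted_ltn_nth ltn_trans) => //; rewrite inE; lia.
  have /andP[pi_gt0 _] : 0 < nth 0 p i <= size z by move/(all_nthP 0): range_p; apply; lia.
  have /andP[_ pi1_le] : 0 < nth 0 p i.+1 <= size z by move/(all_nthP 0): range_p; apply.
  by split=> //; lia.
pose f i : draw m := (nth false y (nth 0 q i), inord (nth 0 p i.+1 - 2)).
have f_inj : {in I &, injective f}.
  move=> i j /I_bounds[lt_i _ p_i] /I_bounds[lt_j _ p_j] /(congr1 (val \o snd)) /=.
  rewrite !inordK; try lia.
  move=> eq_p; have {}eq_p : nth 0 p i.+1 = nth 0 p j.+1 by lia.
  apply/eqP; rewrite -eqSS -(nth_uniq 0 lt_i lt_j (sorted_uniq ltn_trans ltnn sorted_p)).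
  exact/eqP.
rewrite /nonempty_matches -size_filter -/I -(size_map f).
have uniq_fI : uniq (map f I) by rewrite (map_inj_in_uniq f_inj) filter_uniq ?iota_uniq.
rewrite -(card_uniqP uniq_fI).
apply/subset_leq_card/subsetP => _ /mapP[i I_i ->]; have [lt_i gap p_i] := I_bounds i I_i.
rewrite inE /= inordK; last lia.
have -> : (nth 0 p i.+1 - 2).+2 = nth 0 p i.+1 by lia.
by rewrite (lcs_ins_nonempty_match M2_pq lt_i gap).
Qed.

Lemma card_lcs_incr_event m n z y p q : M2 z y p q ->
  #|[pred w : Omega m.+2 n | (Zof w m.+2 == z) && (Yof w == y)]| * nonempty_matches q <=
  #|[pred w : Omega m.+2 n | [&& La w m.+3 == (La w m.+2).+1, Zof w m.+2 == z & Yof w == y]]|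
    * #|{: draw m}|.
Proof.
move=> M2_pq; rewrite -sum_card_set_draw -sum1_card big_distrl /=.
rewrite [X in _ <= X](bigID [pred w | (Zof w m.+2 == z) && (Yof w == y)]) /=.
apply: leq_trans (leq_addr _ _); apply: leq_sum => w /andP[/eqP zE /eqP yE].
have size_z : size z = m.+2 by rewrite -zE size_Zof.
rewrite mul1n; apply: leq_trans (card_lcs_ins_incr size_z M2_pq) _.
apply/eq_leq/eq_card => g; rewrite !inE /La Zof_succ_set_draw Zof_set_draw zE.
by rewrite Yof_set_draw yE !eqxx !andbT.
Qed.

Import Order.TTheory GRing.Theory Num.Theory.
Local Open Scope ring_scope.

Theorem lemma12 (R : realFieldType) (n k : nat) (gamma : R) :
  0 < gamma -> (45 * n <= 100 * k)%N -> (k < n)%N -> (2 <= k)%N ->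
  forall z y : seq bool,
    0 < Prob (R := R) [pred w : Omega k n | (Zof w k == z) && (Yof w == y)] ->
    Eevent gamma n z y ->
    Prob [pred w : Omega k n |
            [&& La w k.+1 == (La w k).+1, Zof w k == z & Yof w == y]]
    >= 1 / 2 * gamma * Prob [pred w : Omega k n | (Zof w k == z) && (Yof w == y)].
Proof.
(* Neither 0.45 n <= k nor the positivity of the conditioning event is needed. *)
move=> gamma_gt0 _ lt_kn le2k z y _ E_zy.
have [m km] : exists m, k = m.+2 by exists k.-2; lia.
subst k; have [p [q min_pq]] := Mmin_exists z y.
have count_ab := card_lcs_incr_event m n (proj1 min_pq).
rewrite card_prod card_bool card_ord in count_ab.
rewrite /Prob mulrA; apply: ler_wpM2r; first by rewrite invr_ge0 ler0n.
set a := #|_| in count_ab *; set b := #|_| in count_ab *; set c := nonempty_matches q in count_ab.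
have le_c : gamma * (m.+1)%:R <= c%:R.
  apply: le_trans (ltW (E_zy p q min_pq)); rewrite ler_pM2l // ler_nat; lia.
have : (m.+1)%:R * (gamma * a%:R) <= (m.+1)%:R * (2 * b%:R).
  rewrite mulrCA mulrA (le_trans (ler_wpM2r (ler0n _ a) le_c)) //.
  by rewrite -!natrM ler_nat; nia.
by rewrite ler_pM2l ?ltr0n // => le_ab; lra.
Qed.
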